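(* For all $k\in\mathbb N$ and $\mu\in\{1,\dots,L\}$, $$f(v_{k,\mu})=-\frac{1}{2\|b\|^2}\langle v_{k,\mu},b\rangle=-\frac{1}{2\|b\|^2}\|v_{k,\mu}\|_A^2,$$ where $\|v\|_A=\sqrt{\langle Av,v\rangle}$.
   Context: Let $\mathcal V=\bigotimes_{\nu=1}^d\mathbb R^{m_\nu}\cong\mathbb R^N$ with the Euclidean inner product $\langle\cdot,\cdot\rangle$. Let $A\in\mathbb R^{N\times N}$ be symmetric positive definite, $b\in\mathcal V\setminus\{0\}$, $f(v)=\frac{1}{\|b\|^2}(\frac12\langle Av,v\rangle-\langle b,v\rangle)$. Let $L\ge d$, $P_1,\dots,P_L$ finite-dimensional real inner product spaces, $P=P_1\times\dots\times P_L$, $U:P\to\mathcal V$ multilinear. For $\mathbf p\in P$, $W_{\mu,\mathbf p^{[\mu]}}:P_\mu\to\mathcal V$ is $q\mapsto U(p_1,\dots,p_{\mu-1},q,p_{\mu+1},\dots,p_L)$; $X^T$ transpose, $X^+$ pseudoinverse. ALS: choose $\mathbf p_1=(p_1^1,\dots,p_L^1)\in P$; for $k=1,2,\dots$ and $\mu=1,\dots,L$ in order, $W_{k,\mu}:=W_{\mu,(p_1^{k+1},\dots,p_{\mu-1}^{k+1},p_{\mu+1}^k,\dots,p_L^k)}$ and $p_\mu^{k+1}:=(W_{k,\mu}^TAW_{k,\mu})^+W_{k,\mu}^Tb$. For $\mu\in\{0,\dots,L\}$ put $v_{k,\mu}=U(p_1^{k+1},\dots,p_\mu^{k+1},p_{\mu+1}^k,\dots,p_L^k)$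 (the iterate after the first $\mu$ updates of sweep $k$). *)

From HB Require Import structures.
From mathcomp Require Import all_boot all_order all_algebra.
From mathcomp Require Import reals.
Set Implicit Arguments. Unset Strict Implicit. Unset Printing Implicit Defensive.
Import Order.TTheory GRing.Theory Num.Theory.
Local Open Scope ring_scope.

Definition ip (R : realType) (N : nat) (u v : 'cV[R]_N) : R := (u^T *m v) 0 0.

Definition normA (R : realType) (N : nat) (A : 'M[R]_N) (v : 'cV[R]_N) : R :=
  Num.sqrt (ip (A *m v) v).

Definition fobj (R : realType) (N : nat) (A : 'M[R]_N) (b v : 'cV[R]_N) : R :=
  (ip b b)^-1 * (2^-1 * ip (A *m v) v - ip b v).

Definition spd (R : realType) (N : nat) (A : 'M[R]_N) : Prop :=
  A^T = A /\ forall v : 'cV[R]_N, v != 0 -> 0 < ip (A *m v) v.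

(* Y is the Moore-Penrose pseudoinverse of X (the four Penrose equations;
   these determine Y uniquely). *)
Definition is_MP_pinv (R : realType) (m n : nat) (X : 'M[R]_(m, n)) (Y : 'M[R]_(n, m))
  : Prop :=
  [/\ X *m Y *m X = X, Y *m X *m Y = Y, (X *m Y)^T = X *m Y & (Y *m X)^T = Y *m X].

Definition multilinear (R : realType) (L N : nat) (n : 'I_L -> nat)
  (U : (forall i : 'I_L, 'cV[R]_(n i)) -> 'cV[R]_N) : Prop :=
  forall (p : forall i : 'I_L, 'cV[R]_(n i)) (i : 'I_L) (a : R) (q1 q2 : 'cV[R]_(n i)),
    U (dfwith p (a *: q1 + q2)) = a *: U (dfwith p q1) + U (dfwith p q2).

(* Matrix of the linear map W_{i,p} : q |-> U(p_1,..,p_{i-1}, q, p_{i+1},..,p_L)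
   (columns = images of the standard basis vectors). *)
Definition Wmx (R : realType) (L N : nat) (n : 'I_L -> nat)
  (U : (forall i : 'I_L, 'cV[R]_(n i)) -> 'cV[R]_N)
  (i : 'I_L) (p : forall j : 'I_L, 'cV[R]_(n j)) : 'M[R]_(N, n i) :=
  \matrix_(r < N, c < n i) (U (dfwith p (delta_mx c (0 : 'I_1)))) r 0.

(* Mixed point during sweep k: components j < i already updated (p (k+1)),
   others from p k. *)
Definition mixpt (R : realType) (L : nat) (n : 'I_L -> nat)
  (p : nat -> forall j : 'I_L, 'cV[R]_(n j)) (k : nat) (i : 'I_L)
  : forall j : 'I_L, 'cV[R]_(n j) :=
  fun j => if (j < i)%N then p k.+1 j else p k j.

(* iterate after the first (i+1) updates of sweep k, i.e. v_{k,i+1} *)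
Definition vit (R : realType) (L N : nat) (n : 'I_L -> nat)
  (U : (forall i : 'I_L, 'cV[R]_(n i)) -> 'cV[R]_N)
  (p : nat -> forall j : 'I_L, 'cV[R]_(n j)) (k : nat) (i : 'I_L) : 'cV[R]_N :=
  U (fun j => if (j <= i)%N then p k.+1 j else p k j).

From HB Require Import structures.
From mathcomp Require Import all_boot all_order all_algebra.
From mathcomp Require Import reals.
From Stdlib Require Import FunctionalExtensionality.
From mathcomp Require Import ring.
Import Order.TTheory GRing.Theory Num.Theory.
Local Open Scope ring_scope.

(* The ALS update is the Galerkin solution on the range of W: with
   M = W^T A W and its (symmetric) pseudoinverse Y, the new iterate is
   v = W Y W^T b, and Y M Y = Y gives <Av, v> = <b, v>. *)

Section InnerProduct.
Variables (R : realType) (N : nat).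

Lemma ipC (u v : 'cV[R]_N) : ip u v = ip v u.
Proof. by rewrite /ip -[in LHS](trmxK v) -trmx_mul mxE. Qed.

Lemma fobj_galerkin (A : 'M[R]_N) (b v : 'cV[R]_N) :
  ip (A *m v) v = ip b v -> fobj A b v = - (2 * ip b b)^-1 * ip v b.
Proof.
move=> Avv; rewrite /fobj Avv (ipC b v) invfM.
set t := (ip b b)^-1; set x := ip v b.
have two_neq0 : (2 : R) != 0 by rewrite pnatr_eq0.
by field.
Qed.

Lemma spd_ip_ge0 (A : 'M[R]_N) (v : 'cV[R]_N) : spd A -> 0 <= ip (A *m v) v.
Proof.
move=> [_ Apos]; have [->|v0] := eqVneq v 0; last exact/ltW/Apos.
by rewrite /ip !mulmx0 mxE.
Qed.

Lemma sqr_normA (A : 'M[R]_N) (v : 'cV[R]_N) :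
  spd A -> normA A v ^+ 2 = ip (A *m v) v.
Proof. by move=> spdA; rewrite /normA sqr_sqrtr // spd_ip_ge0. Qed.

End InnerProduct.

Section Pseudoinverse.
Variable R : realType.

Lemma MP_pinv_sym m (M : 'M[R]_m) (Y : 'M[R]_m) :
  M^T = M -> is_MP_pinv M Y -> Y^T = Y.
Proof.
move=> MT [MYM YMY MY_sym YM_sym].
have YTM : Y^T *m M = M *m Y by rewrite -{1}MT -trmx_mul MY_sym.
have MYT : M *m Y^T = Y *m M by rewrite -{1}MT -trmx_mul YM_sym.
have Y_sandwich : Y = Y *m M *m Y^T.
  transitivity (Y *m (Y^T *m M)); first by rewrite YTM mulmxA YMY.
  transitivity (Y *m Y^T *m (M *m Y *m M)); first by rewrite MYM mulmxA.
  transitivity (Y *m (Y^T *m M) *m (Y *m M)); first by rewrite !mulmxA.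
  by rewrite YTM -[in LHS]MYT !mulmxA YMY.
by rewrite {1}Y_sandwich !trmx_mul trmxK MT mulmxA -Y_sandwich.
Qed.

Lemma galerkin_energy N r (A : 'M[R]_N) (W : 'M[R]_(N, r)) (Y : 'M[R]_r)
    (b v : 'cV[R]_N) :
  A^T = A -> is_MP_pinv (W^T *m A *m W) Y -> v = W *m (Y *m W^T *m b) ->
  ip (A *m v) v = ip b v.
Proof.
move=> AT pinvY ->.
have YT : Y^T = Y by apply: MP_pinv_sym pinvY; rewrite !trmx_mul trmxK AT mulmxA.
have [_ YMY _ _] := pinvY.
by rewrite /ip !trmx_mul trmxK YT AT -[in RHS]YMY !mulmxA.
Qed.

End Pseudoinverse.

Section Multilinear.
Variables (R : realType) (L N : nat) (n : 'I_L -> nat).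
Variable U : (forall i : 'I_L, 'cV[R]_(n i)) -> 'cV[R]_N.
Hypothesis hU : multilinear U.

Lemma multilinear0 (p0 : forall i, 'cV[R]_(n i)) i :
  U (dfwith p0 (0 : 'cV[R]_(n i))) = 0.
Proof.
have := hU p0 i 1 0 0; rewrite !scale1r addr0.
by move/(congr1 (fun x => x - U (dfwith p0 (0 : 'cV_(n i))))); rewrite addrK subrr.
Qed.

Lemma multilinear_sum (p0 : forall i, 'cV[R]_(n i)) i (I : Type) (r : seq I)
    (a : I -> R) (x : I -> 'cV[R]_(n i)) :
  U (dfwith p0 (\sum_(c <- r) a c *: x c))
    = \sum_(c <- r) a c *: U (dfwith p0 (x c)).
Proof.
elim: r => [|c r IH]; first by rewrite !big_nil multilinear0.
by rewrite !big_cons hU IH.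
Qed.

Lemma multilinear_Wmx (p0 : forall i, 'cV[R]_(n i)) i (q : 'cV[R]_(n i)) :
  U (dfwith p0 q) = Wmx U i p0 *m q.
Proof.
rewrite {1}[q]matrix_sum_delta; under eq_bigr do rewrite big_ord1.
rewrite multilinear_sum; apply/matrixP => r c; rewrite (ord1 c).
by rewrite !mxE summxE; apply: eq_bigr => j _; rewrite !mxE mulrC.
Qed.

Lemma vit_mixpt (p : nat -> forall i, 'cV[R]_(n i)) k i :
  vit U p k i = U (dfwith (mixpt p k i) (p k.+1 i)).
Proof.
rewrite /vit; congr U; apply: functional_extensionality_dep => j.
case: dfwithP => [|j' ne]; first by rewrite leqnn.
rewrite /mixpt leq_eqVlt; case: eqVneq => [/val_inj e|//].
by rewrite e eqxx in ne.
Qed.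

End Multilinear.

Theorem mainTheorem9 (R : realType) (d : nat) (m : 'I_d -> nat) (N : nat)
  (hN : N = (\prod_(nu < d) m nu)%N)
  (A : 'M[R]_N) (b : 'cV[R]_N) (L : nat) (n : 'I_L -> nat)
  (U : (forall i : 'I_L, 'cV[R]_(n i)) -> 'cV[R]_N)
  (p : nat -> forall i : 'I_L, 'cV[R]_(n i)) :
  spd A -> b != 0 -> (d <= L)%N -> multilinear U ->
  (forall (k : nat) (i : 'I_L), (1 <= k)%N ->
     let W := Wmx U i (mixpt p k i) in
     exists Y, is_MP_pinv (W^T *m A *m W) Y /\ p k.+1 i = Y *m W^T *m b) ->
  forall (k : nat) (i : 'I_L), (1 <= k)%N ->
    fobj A b (vit U p k i) = - (2 * ip b b)^-1 * ip (vit U p k i) b /\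
    - (2 * ip b b)^-1 * ip (vit U p k i) b
      = - (2 * ip b b)^-1 * (normA A (vit U p k i)) ^+ 2.
Proof.
move=> spdA _ _ hU hALS k i k_ge1.
have [Y [pinvY p_update]] := hALS k i k_ge1.
have energy : ip (A *m vit U p k i) (vit U p k i) = ip b (vit U p k i).
  apply: galerkin_energy pinvY _; first by case: spdA.
  by rewrite vit_mixpt multilinear_Wmx // p_update.
split; first exact: fobj_galerkin.
by rewrite sqr_normA // energy ipC.
Qed.
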